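(* Let $\zeta\in(0,\infty)$ and $(h,w)\in\boldsymbol\Sigma([0,\zeta])$. Then the snake metric $d_{h,w}$ is a continuous pseudo-metric on $[0,\zeta]$ satisfying the four points inequality: for all $s_1,s_2,s_3,s_4\in[0,\zeta]$, $$d_{h,w}(s_1,s_2)+d_{h,w}(s_3,s_4)\le\max\big(d_{h,w}(s_1,s_3)+d_{h,w}(s_2,s_4),\,d_{h,w}(s_1,s_4)+d_{h,w}(s_2,s_3)\big).$$
   Context: $\mathbf C_0$: continuous functions $[0,\infty)\to\mathbb R$ with the topology of uniform convergence on compacts. A snake $(h,w)\in\boldsymbol\Sigma([0,\zeta])$: $h:[0,\zeta]\to[0,\infty)$ continuous, $h(0)=h(\zeta)=0$, $s\mapsto w_s\in\mathbf C_0$ continuous, $w_s(r)=w_s(h(s))=:\widehat w_s$ for $r\ge h(s)$, and $w_{s_1}(r)=w_{s_2}(r)$ for $r\in[0,m_h(s_1,s_2)]$ where $m_h(s_1,s_2)=\min_{[s_1\wedge s_2,s_1\vee s_2]}h$. Snake metric: $M_{h,w}(s_1,s_2)=\min\big(\min_{r\in[m_h(s_1,s_2),h(s_1)]}w_{s_1}(r),\min_{r\in[m_h(s_1,s_2),h(s_2)]}w_{s_2}(r)\big)$, $d_{h,w}(s_1,s_2)=\widehat w_{s_1}+\widehat w_{s_2}-2M_{h,w}(s_1,s_2)$. *)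

From HB Require Import structures.
From mathcomp Require Import all_boot all_order all_algebra.
From mathcomp Require Import all_classical all_reals all_analysis.
Set Implicit Arguments. Unset Strict Implicit. Unset Printing Implicit Defensive.
Import Order.TTheory GRing.Theory Num.Theory.
Import numFieldNormedType.Exports.
Local Open Scope classical_set_scope.
Local Open Scope ring_scope.

Section Snake.
Variable R : realType.

(* m_h(s1,s2) = min of h over [s1 /\ s2, s1 \/ s2] (inf = min since h is continuous) *)
Definition snake_mh (h : R -> R) (s1 s2 : R) : R :=
  inf [set h t | t in `[Num.min s1 s2, Num.max s1 s2]].

Definition snake_M (h : R -> R) (w : R -> R -> R) (s1 s2 : R) : R :=
  Num.min (inf [set w s1 r | r in `[snake_mh h s1 s2, h s1]])
          (inf [set w s2 r | r in `[snake_mh h s1 s2, h s2]]).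

Definition snake_d (h : R -> R) (w : R -> R -> R) (s1 s2 : R) : R :=
  w s1 (h s1) + w s2 (h s2) - 2 * snake_M h w s1 s2.

(* (h,w) in Sigma([0,zeta]); w s : R -> R represents w_s in C_0 (only its values
   on [0,oo) matter). *)
Definition is_snake (zeta : R) (h : R -> R) (w : R -> R -> R) : Prop :=
  [/\ {within `[0, zeta], continuous h},
      (forall s, s \in `[0, zeta] -> 0 <= h s),
      h 0 = 0 /\ h zeta = 0 &
    [/\
      (forall s, s \in `[0, zeta] -> {within [set x : R | 0 <= x], continuous (w s)}),
      (* s |-> w_s continuous for uniform convergence on compacts of [0,oo) *)
      (forall s, s \in `[0, zeta] -> forall K e : R, 0 < e ->
         exists2 d : R, 0 < d & forall s', s' \in `[0, zeta] -> `|s' - s| < d ->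
           forall r, 0 <= r <= K -> `|w s' r - w s r| < e),
      (forall s, s \in `[0, zeta] -> forall r, h s <= r -> w s r = w s (h s))
    & (forall s1 s2, s1 \in `[0, zeta] -> s2 \in `[0, zeta] ->
         forall r, 0 <= r <= snake_mh h s1 s2 -> w s1 r = w s2 r)]].

End Snake.

(* M(s1,s2) is the minimum of the labels along the two branches from height
   m_h(s1,s2) up to s1 and s2.  Since min(m_h(s1,s2), m_h(s2,s3)) <= m_h(s1,s3)
   and the labels of s1 and s2 agree below m_h(s1,s2), every label on the branch
   of s1 above m_h(s1,s3) also occurs above m_h(s1,s2) on the branch of s1 or
   above m_h(s2,s3) on the branch of s2.  Hence min(M(s1,s2), M(s2,s3)) <= M(s1,s3):
   M is a 0-hyperbolic Gromov product with M(s,s) = w_s(h s) >= M(s,s'), and any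
   d(x,y) = Z x + Z y - 2 M(x,y) built from such a product is a pseudo-metric with
   the four points property.  Continuity of d reduces to the continuity of the
   minimum of a continuous family over an interval whose endpoints move
   continuously. *)

From HB Require Import structures.
From mathcomp Require Import all_boot all_order all_algebra.
From mathcomp Require Import all_classical all_reals all_analysis.
From mathcomp Require Import lra.
Import Order.TTheory GRing.Theory Num.Theory.
Import numFieldNormedType.Exports.
Local Open Scope classical_set_scope.
Local Open Scope ring_scope.

Definition product_dist {R : numDomainType} {T : Type}
    (Z : T -> R) (M : T -> T -> R) (x y : T) : R :=
  Z x + Z y - 2 * M x y.

Lemma ultra_isosceles {R : realFieldType} (x y z : R) :
  Num.min y z <= x -> Num.min x z <= y -> Num.min x y <= z ->
  [\/ x = y /\ x <= z, x = z /\ x <= y | y = z /\ y <= x].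
Proof.
rewrite !ge_min => /orP[?|?] /orP[?|?] /orP[?|?];
  first [ apply: Or31; split; [apply/le_anti/andP; split|]; lra
        | apply: Or32; split; [apply/le_anti/andP; split|]; lra
        | apply: Or33; split; [apply/le_anti/andP; split|]; lra ].
Qed.

Section ProductDistance.
Context {R : realFieldType} {T : Type} {D : set T} {Z : T -> R} {M : T -> T -> R}.
Hypothesis M_sym : forall x y, M x y = M y x.
Hypothesis M_diag : forall {x}, D x -> M x x = Z x.
Hypothesis M_le : forall {x y}, D x -> D y -> M x y <= Z x.
Hypothesis M_ultra : forall {x y z}, D x -> D y -> D z ->
  Num.min (M x y) (M y z) <= M x z.

Local Notation d := (product_dist Z M).

Lemma product_dist_diag x : D x -> d x x = 0.
Proof. by move=> Dx; rewrite /product_dist M_diag //; lra. Qed.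

Lemma product_dist_sym x y : d x y = d y x.
Proof. by rewrite /product_dist M_sym [Z x + _]addrC. Qed.

Lemma product_dist_ge0 x y : D x -> D y -> 0 <= d x y.
Proof.
move=> Dx Dy; have := M_le Dx Dy; have := M_le Dy Dx.
by rewrite /product_dist M_sym; lra.
Qed.

Lemma product_dist_triangle x y z : D x -> D y -> D z -> d x z <= d x y + d y z.
Proof.
move=> Dx Dy Dz; have := M_ultra Dx Dy Dz.
have := M_le Dy Dx; have := M_le Dy Dz; rewrite /product_dist (M_sym y x).
by rewrite ge_min => ? ? /orP[] ?; lra.
Qed.

Lemma product_isosceles {x y z} : D x -> D y -> D z ->
  [\/ M x y = M y z /\ M x y <= M x z, M x y = M x z /\ M x y <= M y z
    | M y z = M x z /\ M y z <= M x y].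
Proof.
move=> Dx Dy Dz; apply: ultra_isosceles.
- by have := M_ultra Dx Dz Dy; rewrite (M_sym z y) minC.
- by have := M_ultra Dy Dx Dz; rewrite (M_sym y x).
- exact: M_ultra.
Qed.

(* In each triangle the two smallest products coincide; given this in the four
   triangles, the inequality is linear arithmetic in each of the 3^4 cases. *)
Lemma product_dist_four_point x1 x2 x3 x4 : D x1 -> D x2 -> D x3 -> D x4 ->
  d x1 x2 + d x3 x4 <= Num.max (d x1 x3 + d x2 x4) (d x1 x4 + d x2 x3).
Proof.
move=> D1 D2 D3 D4; rewrite /product_dist le_max.
case: (product_isosceles D1 D2 D3) => -[? ?];
case: (product_isosceles D1 D2 D4) => -[? ?];
case: (product_isosceles D1 D3 D4) => -[? ?];
case: (product_isosceles D2 D3 D4) => -[? ?];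
  apply/orP; first [left; lra | right; lra].
Qed.

End ProductDistance.

Definition inf_itv {R : realType} (f : R -> R) (a b : R) : R :=
  inf [set f r | r in `[a, b]].

Lemma inf_itv1 {R : realType} (f : R -> R) (a : R) : inf_itv f a a = f a.
Proof. by rewrite /inf_itv set_itv1 image_set1 inf1. Qed.

Lemma inf_itv_ge {R : realType} {f : R -> R} {a b : R} (L : R) :
  a <= b -> (forall t, t \in `[a, b] -> L <= f t) -> L <= inf_itv f a b.
Proof.
move=> ab fL; apply: lb_le_inf; first by exists (f a), a; rewrite //= in_itv /= lexx ab.
by move=> _ [t tab <-]; apply: fL.
Qed.

Lemma inf_itv_le {R : realType} {f : R -> R} {a b t : R} :
  {within `[a, b], continuous f} -> t \in `[a, b] -> inf_itv f a b <= f t.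
Proof.
move=> f_cont tab.
have ab : a <= b by move: tab; rewrite in_itv /= => /andP[]; exact: le_trans.
have [c _ fc_min] := EVT_min ab f_cont.
apply: ge_inf; last by exists t.
by exists (f c) => _ [u uab <-]; exact: fc_min.
Qed.

Lemma inf_itv_attained {R : realType} {f : R -> R} {a b : R} :
  {within `[a, b], continuous f} -> a <= b ->
  exists2 c, c \in `[a, b] & inf_itv f a b = f c.
Proof.
move=> f_cont ab; have [c cab fc_min] := EVT_min ab f_cont.
by exists c => //; apply/le_anti; rewrite inf_itv_le //=; exact: inf_itv_ge.
Qed.

Lemma within_continuous_dist_lt {R : realType} {A : set R} {f : R -> R} {x e : R} :
  {within A, continuous f} -> A x -> 0 < e ->
  exists2 d : R, 0 < d & forall y, A y -> `|y - x| < d -> `|f y - f x| < e.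
Proof.
move=> /subspace_continuousP cf Ax e0.
have /cvgrPdist_lt /(_ e e0) := cf x Ax.
rewrite near_withinE /= => -[d d0 fd].
by exists d => // y Ay yx; rewrite distrC; apply: fd; rewrite //= distrC.
Qed.

Lemma clamp_itv {R : realDomainType} {a b a0 b0 r d : R} :
  a <= b -> r \in `[a0, b0] -> `|a0 - a| < d -> `|b0 - b| < d ->
  Num.max a (Num.min r b) \in `[a, b] /\ `|r - Num.max a (Num.min r b)| < d.
Proof.
move=> ab; rewrite in_itv /= => /andP[a0r rb0] /ltr_normlP[? ?] /ltr_normlP[? ?].
have [rb|br] := leP r b.
- have [ar|ra] := leP a r.
  + by rewrite in_itv /= ar rb; split => //; apply/ltr_normlP; split; lra.
  + by rewrite in_itv /= lexx ab; split => //; apply/ltr_normlP; split; lra.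
- rewrite max_r // in_itv /= ab lexx; split => //.
  by apply/ltr_normlP; split; lra.
Qed.

Section ParametricInf.
Context {R : realType} {Ds I : set R} {V : R -> R -> R}.
Hypothesis I_interval : is_interval I.
Hypothesis V_cont : forall {s}, Ds s -> {within I, continuous (V s)}.
Hypothesis V_unif : forall {s0}, Ds s0 -> forall K e : R, 0 < e ->
  exists2 d : R, 0 < d & forall s, Ds s -> `|s - s0| < d ->
    forall r, I r -> r <= K -> `|V s r - V s0 r| < e.

Lemma V_cont_itv {s a b : R} : Ds s -> I a -> I b -> {within `[a, b], continuous (V s)}.
Proof.
move=> Ds_s Ia Ib; have sub : `[a, b] `<=` I.
  by move=> t /=; rewrite in_itv /=; exact: I_interval.
exact: continuous_subspaceW sub (V_cont Ds_s).
Qed.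

Context {T : Type} {F : set_system T} {FF : Filter F}.

Lemma cvg_V {sigma rho : T -> R} {s0 r0 : R} : Ds s0 -> I r0 ->
  sigma @ F --> s0 -> rho @ F --> r0 ->
  (\forall t \near F, Ds (sigma t) /\ I (rho t)) ->
  V (sigma t) (rho t) @[t --> F] --> V s0 r0.
Proof.
move=> Ds0 Ir0 sigma_s0 rho_r0 near_dom.
apply/cvgrPdist_lt => e e0; have e2 : 0 < e / 2 by rewrite divr_gt0.
have [du du0 Vu] := V_unif Ds0 (r0 + 1) _ e2.
have [dc dc0 Vc] := within_continuous_dist_lt (V_cont Ds0) Ir0 e2.
near=> t.
have [Dst Irt] : Ds (sigma t) /\ I (rho t) by near: t.
have st : `|sigma t - s0| < du by near: t; exact: (cvgr_distC_lt _ _ sigma_s0).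
have rt : `|rho t - r0| < dc by near: t; exact: (cvgr_distC_lt _ _ rho_r0).
have /ltr_normlP[_ rt1] : `|rho t - r0| < 1 by near: t; exact: (cvgr_distC_lt _ _ rho_r0).
have /ltr_normlP[? ?] : `|V s0 (rho t) - V s0 r0| < e / 2 by exact: Vc.
have /ltr_normlP[? ?] : `|V (sigma t) (rho t) - V s0 (rho t)| < e / 2.
  by apply: Vu => //; lra.
by apply/ltr_normlP; split; lra.
Unshelve. all: end_near.
Qed.

Context {sigma alpha beta : T -> R} {s0 a0 b0 : R}.
Hypotheses (Ds_s0 : Ds s0) (I_a0 : I a0) (I_b0 : I b0) (a0_le_b0 : a0 <= b0).
Hypotheses (sigma_s0 : sigma @ F --> s0) (alpha_a0 : alpha @ F --> a0)
  (beta_b0 : beta @ F --> b0).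
Hypothesis near_dom :
  \forall t \near F, [/\ Ds (sigma t), I (alpha t), I (beta t) & alpha t <= beta t].

Local Notation inf_t t := (inf_itv (V (sigma t)) (alpha t) (beta t)).

Lemma inf_itv_lt_near e : 0 < e ->
  \forall t \near F, inf_t t < inf_itv (V s0) a0 b0 + e.
Proof.
move=> e0; have e2 : 0 < e / 2 by rewrite divr_gt0.
have [r0 r0ab ->] := inf_itv_attained (V_cont_itv Ds_s0 I_a0 I_b0) a0_le_b0.
have Ir0 : I r0 by move: r0ab; rewrite in_itv /=; exact: I_interval.
have [dc dc0 Vc] := within_continuous_dist_lt (V_cont Ds_s0) Ir0 e2.
have [du du0 Vu] := V_unif Ds_s0 (b0 + 1) _ e2.
near=> t.
have [Dst Iat Ibt abt] : [/\ Ds (sigma t), I (alpha t), I (beta t) & alpha t <= beta t].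
  by near: t.
have st : `|sigma t - s0| < du by near: t; exact: (cvgr_distC_lt _ _ sigma_s0).
have at_ : `|a0 - alpha t| < dc by near: t; exact: (cvgr_dist_lt _ _ alpha_a0).
have bt : `|b0 - beta t| < dc by near: t; exact: (cvgr_dist_lt _ _ beta_b0).
have /ltr_normlP[bt1 _] : `|b0 - beta t| < 1 by near: t; exact: (cvgr_dist_lt _ _ beta_b0).
have [rab r0r] := clamp_itv abt r0ab at_ bt.
set r := Num.max _ _ in rab r0r; clearbody r.
have Ir : I r by move: (rab); rewrite in_itv /=; exact: I_interval.
apply: le_lt_trans (inf_itv_le (V_cont_itv Dst Iat Ibt) rab) _.
move: rab; rewrite in_itv /= => /andP[_ rbt].
have /ltr_normlP[_ ?] : `|V s0 r - V s0 r0| < e / 2 by apply: Vc; rewrite // distrC.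
have /ltr_normlP[_ ?] : `|V (sigma t) r - V s0 r| < e / 2 by apply: Vu => //; lra.
lra.
Unshelve. all: end_near.
Qed.

Lemma inf_itv_gt_near e : 0 < e ->
  \forall t \near F, inf_itv (V s0) a0 b0 - e < inf_t t.
Proof.
move=> e0; have e2 : 0 < e / 2 by rewrite divr_gt0.
have [da da0 Va] := within_continuous_dist_lt (V_cont Ds_s0) I_a0 e2.
have [db db0 Vb] := within_continuous_dist_lt (V_cont Ds_s0) I_b0 e2.
have [du du0 Vu] := V_unif Ds_s0 (b0 + 1) _ e2.
near=> t.
have [Dst Iat Ibt abt] : [/\ Ds (sigma t), I (alpha t), I (beta t) & alpha t <= beta t].
  by near: t.
have st : `|sigma t - s0| < du by near: t; exact: (cvgr_distC_lt _ _ sigma_s0).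
have /ltr_normlP[_ at_] : `|a0 - alpha t| < da.
  by near: t; exact: (cvgr_dist_lt _ _ alpha_a0).
have /ltr_normlP[bt _] : `|b0 - beta t| < db by near: t; exact: (cvgr_dist_lt _ _ beta_b0).
have /ltr_normlP[bt1 _] : `|b0 - beta t| < 1 by near: t; exact: (cvgr_dist_lt _ _ beta_b0).
have [c cab ->] := inf_itv_attained (V_cont_itv Dst Iat Ibt) abt.
have Ic : I c by move: (cab); rewrite in_itv /=; exact: I_interval.
move: cab; rewrite in_itv /= => /andP[atc cbt].
have /ltr_normlP[? _] : `|V (sigma t) c - V s0 c| < e / 2 by apply: Vu => //; lra.
suff [c' c'ab c'c] : exists2 c', c' \in `[a0, b0] & V s0 c' < V s0 c + e / 2.
  by have := inf_itv_le (V_cont_itv Ds_s0 I_a0 I_b0) c'ab; lra.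
have [ca0|a0c] := ltP c a0.
  exists a0; first by rewrite in_itv /= lexx a0_le_b0.
  have /ltr_normlP[? _] : `|V s0 c - V s0 a0| < e / 2.
    by apply: Va => //; apply/ltr_normlP; split; lra.
  lra.
have [cb0|b0c] := leP c b0; first by exists c; [rewrite in_itv /= a0c cb0 | lra].
exists b0; first by rewrite in_itv /= lexx a0_le_b0.
have /ltr_normlP[? _] : `|V s0 c - V s0 b0| < e / 2.
  by apply: Vb => //; apply/ltr_normlP; split; lra.
lra.
Unshelve. all: end_near.
Qed.

Lemma cvg_inf_itv : inf_t t @[t --> F] --> inf_itv (V s0) a0 b0.
Proof.
apply/cvgrPdist_lt => e e0; near=> t; rewrite ltr_distlC; apply/andP; split.
  by near: t; exact: inf_itv_gt_near.
by near: t; exact: inf_itv_lt_near.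
Unshelve. all: end_near.
Qed.

End ParametricInf.

Lemma cvg_min {R : realType} {T : Type} {F : set_system T} {FF : Filter F}
    (f g : T -> R) (a b : R) :
  f @ F --> a -> g @ F --> b -> Num.min (f t) (g t) @[t --> F] --> Num.min a b.
Proof.
by move=> fa gb; apply: continuous2_cvg fa gb; exact: (@min_continuous _ R (a, b)).
Qed.

Lemma cvg_max {R : realType} {T : Type} {F : set_system T} {FF : Filter F}
    (f g : T -> R) (a b : R) :
  f @ F --> a -> g @ F --> b -> Num.max (f t) (g t) @[t --> F] --> Num.max a b.
Proof.
by move=> fa gb; apply: continuous2_cvg fa gb; exact: (@max_continuous _ R (a, b)).
Qed.

Lemma itv_min_max_sub {R : realDomainType} {a b x y : R} :
  x \in `[a, b] -> y \in `[a, b] -> `[Num.min x y, Num.max x y] `<=` `[a, b].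
Proof.
rewrite !in_itv /= => /andP[ax xb] /andP[ay yb] t /=; rewrite !in_itv /=.
by rewrite ge_min le_max => /andP[/orP[] ? /orP[] ?]; apply/andP; split; lra.
Qed.

Lemma min_le_max {R : realDomainType} (x y : R) : Num.min x y <= Num.max x y.
Proof. by rewrite ge_min le_max lexx. Qed.

Lemma min_max_in_itv {R : realDomainType} {a b x y : R} :
  x \in `[a, b] -> y \in `[a, b] -> Num.min x y \in `[a, b] /\ Num.max x y \in `[a, b].
Proof. by case: leP. Qed.

Lemma mem_itv_min_max_l {R : realDomainType} (x y : R) :
  x \in `[Num.min x y, Num.max x y].
Proof. by rewrite in_itv /= ge_min le_max lexx. Qed.

Lemma itv_min_max_split {R : realDomainType} (y : R) {x z c : R} :
  c \in `[Num.min x z, Num.max x z] ->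
  c \in `[Num.min x y, Num.max x y] \/ c \in `[Num.min y z, Num.max y z].
Proof.
rewrite !in_itv /= !ge_min !le_max.
case: (leP x c) => ?; case: (leP z c) => ?; case: (leP y c) => ?;
  rewrite /= ?orbT ?orbF ?andbT //=; lra.
Qed.

Lemma snake_mhE {R : realType} (h : R -> R) s1 s2 :
  snake_mh h s1 s2 = inf_itv h (Num.min s1 s2) (Num.max s1 s2).
Proof. by []. Qed.

Lemma snake_ME {R : realType} (h : R -> R) w s1 s2 :
  snake_M h w s1 s2 = Num.min (inf_itv (w s1) (snake_mh h s1 s2) (h s1))
                              (inf_itv (w s2) (snake_mh h s1 s2) (h s2)).
Proof. by []. Qed.

Lemma snake_dE {R : realType} (h : R -> R) w :
  snake_d h w = product_dist (fun s => w s (h s)) (snake_M h w).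
Proof. by []. Qed.

Lemma snake_mh_sym {R : realType} (h : R -> R) s1 s2 :
  snake_mh h s1 s2 = snake_mh h s2 s1.
Proof. by rewrite !snake_mhE minC maxC. Qed.

Lemma snake_mh_diag {R : realType} (h : R -> R) s : snake_mh h s s = h s.
Proof. by rewrite snake_mhE minxx maxxx inf_itv1. Qed.

Lemma snake_M_sym {R : realType} (h : R -> R) w s1 s2 :
  snake_M h w s1 s2 = snake_M h w s2 s1.
Proof. by rewrite !snake_ME snake_mh_sym minC. Qed.

Lemma snake_M_diag {R : realType} (h : R -> R) w s : snake_M h w s s = w s (h s).
Proof. by rewrite snake_ME snake_mh_diag inf_itv1 minxx. Qed.

Section Snake.
Context {R : realType} {zeta : R} {h : R -> R} {w : R -> R -> R}.
Hypothesis snake : is_snake zeta h w.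

Local Notation in0z s := (s \in `[0, zeta]).

Let h_cont : {within `[0, zeta], continuous h}. Proof. by case: snake. Qed.
Let h_ge0 {s} : in0z s -> 0 <= h s. Proof. by case: snake => _ + _ _; apply. Qed.
Let w_cont {s} : in0z s -> {within [set r | 0 <= r], continuous (w s)}.
Proof. by case: snake => _ _ _ [+ _ _ _]; apply. Qed.
Let w_coh {s1 s2} : in0z s1 -> in0z s2 ->
  forall r, 0 <= r <= snake_mh h s1 s2 -> w s1 r = w s2 r.
Proof. by case: snake => _ _ _ [_ _ _]; apply. Qed.

Lemma snake_mh_le {s1 s2 t} : in0z s1 -> in0z s2 ->
  t \in `[Num.min s1 s2, Num.max s1 s2] -> snake_mh h s1 s2 <= h t.
Proof.
move=> Z1 Z2; apply: inf_itv_le.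
exact: continuous_subspaceW (itv_min_max_sub Z1 Z2) h_cont.
Qed.

Lemma snake_mh_bounds {s1 s2} : in0z s1 -> in0z s2 ->
  [/\ 0 <= snake_mh h s1 s2, snake_mh h s1 s2 <= h s1 & snake_mh h s1 s2 <= h s2].
Proof.
move=> Z1 Z2; split; [|exact: snake_mh_le (mem_itv_min_max_l _ _)|].
- rewrite snake_mhE; have [c cI ->] := inf_itv_attained
    (continuous_subspaceW (itv_min_max_sub Z1 Z2) h_cont) (min_le_max s1 s2).
  exact/h_ge0/(itv_min_max_sub Z1 Z2).
- by apply: snake_mh_le; rewrite // minC maxC mem_itv_min_max_l.
Qed.

Lemma snake_mh_ultra {s1 s2 s3} : in0z s1 -> in0z s2 -> in0z s3 ->
  Num.min (snake_mh h s1 s2) (snake_mh h s2 s3) <= snake_mh h s1 s3.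
Proof.
move=> Z1 Z2 Z3; rewrite [X in _ <= X]snake_mhE.
have [c /(itv_min_max_split s2)[] cI ->] := inf_itv_attained
  (continuous_subspaceW (itv_min_max_sub Z1 Z3) h_cont) (min_le_max s1 s3).
- by rewrite ge_min snake_mh_le.
- by rewrite ge_min (snake_mh_le Z2 Z3 cI) orbT.
Qed.

Lemma inf_itv_w_le {s a b t} : in0z s -> 0 <= a -> t \in `[a, b] ->
  inf_itv (w s) a b <= w s t.
Proof.
move=> Zs a0; apply: inf_itv_le; have sub : `[a, b] `<=` [set r | 0 <= r].
  by move=> r /=; rewrite in_itv /= => /andP[ar _]; exact: le_trans ar.
exact: continuous_subspaceW sub (w_cont Zs).
Qed.

Lemma snake_M_le s1 s2 : in0z s1 -> in0z s2 -> snake_M h w s1 s2 <= w s1 (h s1).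
Proof.
move=> Z1 Z2; have [m0 m1 _] := snake_mh_bounds Z1 Z2.
by rewrite snake_ME ge_min inf_itv_w_le // in_itv /= m1 lexx.
Qed.

Lemma snake_M_ultra_half {s1 s2 s3} : in0z s1 -> in0z s2 -> in0z s3 ->
  Num.min (snake_M h w s1 s2) (snake_M h w s2 s3) <=
  inf_itv (w s1) (snake_mh h s1 s3) (h s1).
Proof.
move=> Z1 Z2 Z3; have := snake_mh_ultra Z1 Z2 Z3.
have [m12_0 _ m12_2] := snake_mh_bounds Z1 Z2.
have [m23_0 _ _] := snake_mh_bounds Z2 Z3.
have [m13_0 m13_1 _] := snake_mh_bounds Z1 Z3.
set m12 := snake_mh h s1 s2 in m12_0 m12_2 *; set m23 := snake_mh h s2 s3 in m23_0 *.
rewrite !snake_ME -/m12 -/m23 => ultra.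
set L := Num.min _ _.
have L12 : L <= inf_itv (w s1) m12 (h s1) by rewrite /L !ge_min lexx.
have L23 : L <= inf_itv (w s2) m23 (h s2) by rewrite /L !ge_min lexx !orbT.
apply: inf_itv_ge => // t; rewrite in_itv /= => /andP[m13t th1].
have [m12t|tm12] := leP m12 t.
  by apply: le_trans L12 (inf_itv_w_le Z1 m12_0 _); rewrite in_itv /= m12t.
have -> : w s1 t = w s2 t by apply: w_coh => //; apply/andP; split; lra.
have m23t : m23 <= t by move: ultra; rewrite ge_min => /orP[]; lra.
by apply: le_trans L23 (inf_itv_w_le Z2 m23_0 _); rewrite in_itv /= m23t; lra.
Qed.

Lemma snake_M_ultra s1 s2 s3 : in0z s1 -> in0z s2 -> in0z s3 ->
  Num.min (snake_M h w s1 s2) (snake_M h w s2 s3) <= snake_M h w s1 s3.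
Proof.
move=> Z1 Z2 Z3; rewrite [X in _ <= X]snake_ME le_min snake_M_ultra_half //=.
by rewrite snake_mh_sym minC (snake_M_sym _ _ s2) (snake_M_sym _ _ s1) snake_M_ultra_half.
Qed.

(* [h] enters the parametric results as the family [fun _ => h]. *)
Let h_unif s0 : [set: R] s0 -> forall K e : R, 0 < e -> exists2 d : R, 0 < d &
  forall s, [set: R] s -> `|s - s0| < d ->
    forall r, [set` `[0, zeta]] r -> r <= K -> `|h r - h r| < e.
Proof. by move=> _ K e e0; exists 1 => // *; rewrite subrr normr0. Qed.

Let w_unif s0 : in0z s0 -> forall K e : R, 0 < e -> exists2 d : R, 0 < d &
  forall s, in0z s -> `|s - s0| < d ->
    forall r, 0 <= r -> r <= K -> `|w s r - w s0 r| < e.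
Proof.
case: snake => _ _ _ [_ + _ _] Zs0 K e e0 => /(_ s0 Zs0 K e e0) [d d0 wd].
by exists d => // s Zs sd r r0 rK; apply: wd; rewrite ?r0.
Qed.

Let nonneg_interval : is_interval [set r : R | 0 <= r].
Proof. by move=> a b /= a0 _ r /andP[ar _]; exact: le_trans ar. Qed.

Section Convergence.
Context {T : Type} {F : set_system T} {FF : Filter F}.
Variables (u v : T -> R) (x y : R).
Hypotheses (u_x : u @ F --> x) (v_y : v @ F --> y) (Zx : in0z x) (Zy : in0z y).
Hypotheses (near_u : \forall t \near F, in0z (u t))
  (near_v : \forall t \near F, in0z (v t)).

Lemma cvg_snake_h : h (u t) @[t --> F] --> h x.
Proof.
apply: (cvg_V (V := fun _ => h) (sigma := u) (s0 := x) (fun _ _ => h_cont) h_unif) => //.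
by move: near_u; apply: filterS.
Qed.

Lemma cvg_snake_hat : w (u t) (h (u t)) @[t --> F] --> w x (h x).
Proof.
apply: (cvg_V (@w_cont) w_unif) => //=; first exact: h_ge0.
  exact: cvg_snake_h.
by move: near_u; apply: filterS => t Zu; split => //; exact: h_ge0.
Qed.

Lemma cvg_snake_mh : snake_mh h (u t) (v t) @[t --> F] --> snake_mh h x y.
Proof.
have [Zmin Zmax] := min_max_in_itv Zx Zy.
apply: (cvg_inf_itv (V := fun _ => h) (sigma := u) (s0 := x)
  (@interval_is_interval R `[0, zeta]) (fun _ _ => h_cont) h_unif) => //.
- exact: min_le_max.
- exact: cvg_min.
- exact: cvg_max.
move: near_u near_v; apply: filterS2 => t Zu Zv; have [? ?] := min_max_in_itv Zu Zv.
by split => //; exact: min_le_max.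
Qed.

Lemma cvg_snake_inf :
  inf_itv (w (u t)) (snake_mh h (u t) (v t)) (h (u t)) @[t --> F] -->
  inf_itv (w x) (snake_mh h x y) (h x).
Proof.
have [? ? _] := snake_mh_bounds Zx Zy.
apply: (cvg_inf_itv nonneg_interval (@w_cont) w_unif) => //=.
- exact: h_ge0.
- exact: cvg_snake_mh.
- exact: cvg_snake_h.
move: near_u near_v; apply: filterS2 => t Zu Zv; have [? ? _] := snake_mh_bounds Zu Zv.
by split => //; exact: h_ge0.
Qed.

End Convergence.

Lemma cvg_snake_d {T : Type} {F : set_system T} {FF : Filter F} (u v : T -> R) (x y : R) :
  u @ F --> x -> v @ F --> y -> in0z x -> in0z y ->
  (\forall t \near F, in0z (u t)) -> (\forall t \near F, in0z (v t)) ->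
  snake_d h w (u t) (v t) @[t --> F] --> snake_d h w x y.
Proof.
move=> u_x v_y Zx Zy near_u near_v.
apply: cvgB; first by apply: cvgD; exact: cvg_snake_hat.
apply: cvgMl_tmp; apply: cvg_min; first exact: cvg_snake_inf.
rewrite snake_mh_sym; under eq_fun do rewrite snake_mh_sym.
exact: cvg_snake_inf.
Qed.

Lemma snake_d_continuous :
  {within [set p : R * R | p.1 \in `[0, zeta] /\ p.2 \in `[0, zeta]],
    continuous (fun p : R * R => snake_d h w p.1 p.2)}.
Proof.
apply/subspace_continuousP => -[x1 x2] /= [Z1 Z2].
have near_P := withinT [set p : R * R | in0z p.1 /\ in0z p.2] (nbhs_filter (x1, x2)).
apply: cvg_snake_d => //.
- exact: cvg_within_filter cvg_fst.
- exact: cvg_within_filter cvg_snd.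
- by move: near_P; apply: filterS => p [].
- by move: near_P; apply: filterS => p [].
Qed.

End Snake.

Theorem lemma4p22 (R : realType) (zeta : R) (h : R -> R) (w : R -> R -> R) :
  0 < zeta -> is_snake zeta h w ->
  [/\ (* continuity on [0,zeta]^2 *)
      {within [set p : R * R | p.1 \in `[0, zeta] /\ p.2 \in `[0, zeta]],
         continuous (fun p : R * R => snake_d h w p.1 p.2)},
      (* pseudo-metric *)
      (forall s, s \in `[0, zeta] -> snake_d h w s s = 0),
      (forall s1 s2, s1 \in `[0, zeta] -> s2 \in `[0, zeta] ->
         0 <= snake_d h w s1 s2 /\ snake_d h w s1 s2 = snake_d h w s2 s1),
      (forall s1 s2 s3, s1 \in `[0, zeta] -> s2 \in `[0, zeta] -> s3 \in `[0, zeta] ->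
         snake_d h w s1 s3 <= snake_d h w s1 s2 + snake_d h w s2 s3)
    & (* four points inequality *)
      (forall s1 s2 s3 s4, s1 \in `[0, zeta] -> s2 \in `[0, zeta] ->
         s3 \in `[0, zeta] -> s4 \in `[0, zeta] ->
         snake_d h w s1 s2 + snake_d h w s3 s4 <=
         Num.max (snake_d h w s1 s3 + snake_d h w s2 s4)
                 (snake_d h w s1 s4 + snake_d h w s2 s3))].
Proof.
move=> _ snake.
have M_diag s : s \in `[0, zeta] -> snake_M h w s s = w s (h s).
  by move=> _; exact: snake_M_diag.
have M_le := snake_M_le snake; have M_ultra := snake_M_ultra snake.
split; first exact: snake_d_continuous.
all: rewrite snake_dE.
- exact: product_dist_diag M_diag.
- move=> s1 s2 Z1 Z2; split; first exact: product_dist_ge0 (snake_M_sym h w) M_le _ _ Z1 Z2.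
  exact: product_dist_sym (snake_M_sym h w) s1 s2.
- exact: product_dist_triangle (snake_M_sym h w) M_le M_ultra.
- exact: product_dist_four_point (snake_M_sym h w) M_ultra.
Qed.
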